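(* Fix the parameters $S_1,\dots,S_{\mathcal K}$, $\lambda_1,\dots,\lambda_{\mathcal K}$ of the storage model in the context. Suppose that there exists a routing policy $P$ such that the shape process $\tilde X(t)$ with routing policy $P$ is recurrent. Then the linear system \[ \sum_{j=1}^{\kappa_i}\alpha_{ij}=\lambda_i\ (i=1,\dots,\mathcal K),\qquad \sum_{i=1}^{\mathcal K}\sum_{j=1}^{\kappa_i}\alpha_{ij}\,\delta_{\ell,s^i_j}=\tfrac1n\ (\ell=1,\dots,n) \] has a non-negative solution $(\alpha_{ij})$ (and hence there exists a routing policy, not depending on $x$, under which arrivals at all nodes are independent Poisson processes of common rate $1/n$).
   Context: Storage model: there are $n$ nodes $\{1,\dots,n\}$ and $\mathcal K\ge1$ non-empty neighborhoods $S_1,\dots,S_{\mathcal K}\subset\{1,\dots,n\}$ with $\bigcup_i S_i=\{1,\dots,n\}$; $\kappa_i=|S_i|$ and $S_i=\{s^i_1,\dots,s^i_{\kappa_i}\}$. Items arrive at $S_i$ as independent Poisson processes with rates $\lambda_i>0$, $\sum_{i=1}^{\mathcal K}\lambda_i=1$. Let $\Lambda_i=\{p\in\mathbb R^{\kappa_i}:p_j\ge0,\sum_j p_j=1\}$. A routing policy is a map $P:\mathbb N^n\to\Lambda_1\times\dots\times\Lambda_{\mathcal K}$ with $P(x+c\mathbf 1)=P(x)$ for all integers $c$; an item arriving at $S_i$ when the configuration is $x$ is stored at node $s^i_j$ with probability $p^{(i)}_j(x)$, independently for each arrival (the policy need not be local). $X(t)$ is the vector of node loads at time $t$, $M(t)=\frac1n\sum_iX_i(t)$,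 the shape is $\tilde X(t)=X(t)-M(t)\mathbf 1$, and $\tilde X^e(m)$ is the shape observed at successive arrival moments. With $\tau=\inf\{m>0:\tilde X^e(m)=0\}$, the process is called recurrent if $\mathbf P(\tau<\infty\mid\tilde X^e(0)=x)=1$ for every $x$. $\delta_{\ell,m}$ is the Kronecker delta. *)

From HB Require Import structures.
From mathcomp Require Import all_boot all_order all_algebra.
From mathcomp Require Import reals.
Set Implicit Arguments. Unset Strict Implicit. Unset Printing Implicit Defensive.
Import Order.TTheory GRing.Theory Num.Theory.
Local Open Scope ring_scope.

(* A configuration of node loads: x : 'I_n -> nat. *)

Definition cshift (n : nat) (x : 'I_n -> nat) (c : nat) : 'I_n -> nat :=
  fun l => (x l + c)%N.

Definition incr (n : nat) (x : 'I_n -> nat) (l : 'I_n) : 'I_n -> nat :=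
  fun k => (x k + (k == l))%N.

(* the shape x - M 1 is zero iff all loads are equal *)
Definition balanced (n : nat) (x : 'I_n -> nat) : bool :=
  [forall l, [forall l', x l == x l']].

(* Routing policy: p x i j = p^{(i)}_j(x), probability that an item arriving
   at neighborhood S_i in configuration x is stored at node s^i_j. *)
Definition routing_policy (R : realType) (n K : nat) (kappa : 'I_K -> nat)
  (p : ('I_n -> nat) -> forall i : 'I_K, 'I_(kappa i) -> R) : Prop :=
  (forall x i j, 0 <= p x i j) /\
  (forall x i, \sum_(j < kappa i) p x i j = 1) /\
  (forall x c i j, p (cshift x c) i j = p x i j).

(* Transition probability of the embedded chain at arrival moments:
   the next arrival is at S_i w.p. lambda_i (sum lambda = 1), then routed by p. *)
Definition step_prob (R : realType) (n K : nat) (kappa : 'I_K -> nat)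
  (s : forall i : 'I_K, 'I_(kappa i) -> 'I_n) (lam : 'I_K -> R)
  (p : ('I_n -> nat) -> forall i : 'I_K, 'I_(kappa i) -> R)
  (x : 'I_n -> nat) (l : 'I_n) : R :=
  \sum_(i < K) lam i * \sum_(j < kappa i) p x i j * (s i j == l)%:R.

(* hit_prob N x = P(tau <= N | X^e(0) = x), tau = inf{m > 0 : shape = 0}. *)
Fixpoint hit_prob (R : realType) (n K : nat) (kappa : 'I_K -> nat)
  (s : forall i : 'I_K, 'I_(kappa i) -> 'I_n) (lam : 'I_K -> R)
  (p : ('I_n -> nat) -> forall i : 'I_K, 'I_(kappa i) -> R)
  (N : nat) (x : 'I_n -> nat) : R :=
  match N with
  | O => 0
  | N'.+1 => \sum_(l < n) step_prob s lam p x l *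
       (if balanced (incr x l) then 1 else hit_prob s lam p N' (incr x l))
  end.

(* Recurrence: P(tau < oo | X^e(0) = x) = lim_N P(tau <= N) = 1 for all x. *)
Definition recurrent (R : realType) (n K : nat) (kappa : 'I_K -> nat)
  (s : forall i : 'I_K, 'I_(kappa i) -> 'I_n) (lam : 'I_K -> R)
  (p : ('I_n -> nat) -> forall i : 'I_K, 'I_(kappa i) -> R) : Prop :=
  forall x : 'I_n -> nat, forall eps : R, 0 < eps ->
    exists N : nat, 1 - eps <= hit_prob s lam p N x.

(* If the balanced routing problem -- split each rate lam_i over S_i so that
   every node receives 1/n -- has no solution, then by a fractional Hall
   theorem some family I of neighbourhoods has total rate mu = lam(I) larger
   than m/n, where U is the union of the S_i, i in I, and m = |U|.  (The Hall
   theorem is proved by induction on the number of sources plus usable edges: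
   push flow along one edge until a demand, a capacity or the slack of some set
   is exhausted, and split along the tight set in the last case.)  Choose
   a < 1 <= b with mu a + (1 - mu) b = 1 and a^m b^(n-m) >= 1 (AM-GM).  Every
   arrival at I is stored in U, so h(x) = a^x(U) b^x(U^c) is superharmonic for
   the embedded chain, and it is at least 1 on balanced configurations; hence
   from the configuration with one item in U the shape returns to 0 with
   probability at most a < 1, contradicting recurrence. *)

From HB Require Import structures.
From mathcomp Require Import all_boot all_order all_algebra.
From mathcomp Require Import reals.
From mathcomp Require Import ring lra zify.
Import Order.TTheory GRing.Theory Num.Theory.
Local Open Scope ring_scope.

Set Implicit Arguments. Unset Strict Implicit. Unset Printing Implicit Defensive.

Lemma sum_delta_in (R : pzRingType) (X : finType) (P : {pred X}) (x0 : X) (t : R) :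
  \sum_(x in P) (x == x0)%:R * t = (x0 \in P)%:R * t.
Proof.
have [x0P|x0NP] := boolP (x0 \in P).
  rewrite (bigD1 x0) //= eqxx big1 ?addr0 // => x /andP[_ /negbTE->].
  by rewrite mul0r.
rewrite big1 ?mul0r // => x xP; case: eqP => [ex|_]; last by rewrite mul0r.
by move: xP; rewrite ex (negbTE x0NP).
Qed.

Lemma sum_delta (R : pzRingType) (X : finType) (x0 : X) (F : X -> R) :
  \sum_x (x == x0)%:R * F x = F x0.
Proof.
by rewrite (bigD1 x0) //= eqxx mul1r big1 ?addr0 // => x /negbTE->; rewrite mul0r.
Qed.

Lemma card_setD1_lt (X : finType) (A : {set X}) x : x \in A -> (#|A :\ x| < #|A|)%N.
Proof. by move=> xA; rewrite (cardsD1 x A) xA. Qed.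

Section FractionalHall.
Variables (R : realFieldType) (T L : finType) (E : T -> L -> bool).
Implicit Types (A I J : {set T}) (lam : T -> R) (d : L -> R) (al : T -> L -> R).

Definition neighbours I : {set L} := [set l | [exists i in I, E i l]].

Definition slack I lam d := \sum_(l in neighbours I) d l - \sum_(i in I) lam i.

Definition hall_condition A lam d := forall I, I \subset A -> 0 <= slack I lam d.

Definition allocation A lam d al :=
  [/\ forall i l, 0 <= al i l, forall i l, ~~ E i l -> al i l = 0,
      forall i, i \in A -> \sum_l al i l = lam i &
      forall l, \sum_(i in A) al i l <= d l].

Definition lower_at (X : eqType) (f : X -> R) x0 t := fun x => f x - (x == x0)%:R * t.

Lemma lower_at_gt0 (X : eqType) (f : X -> R) x0 t x :
  0 <= t -> 0 < lower_at f x0 t x -> 0 < f x.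
Proof. by rewrite /lower_at; case: eqP; rewrite ?mul1r ?mul0r; lra. Qed.

Lemma lower_at_ge0 (X : eqType) (f : X -> R) x0 t x :
  (forall x, 0 <= f x) -> t <= f x0 -> 0 <= lower_at f x0 t x.
Proof. by move=> /(_ x); rewrite /lower_at; case: eqP => [->|]; rewrite ?mul1r ?mul0r; lra. Qed.

Lemma neighboursS I J : J \subset I -> neighbours J \subset neighbours I.
Proof.
move=> JI; apply/subsetP => l; rewrite !inE => /existsP[i /andP[iJ e]].
by apply/existsP; exists i; rewrite (subsetP JI) ?e.
Qed.

Lemma neighboursU I J : neighbours (I :|: J) = neighbours I :|: neighbours J.
Proof.
apply/setP => l; rewrite !inE; apply/existsP/orP => [[i]|].
  by rewrite inE => /andP[/orP[] iIJ e]; [left|right]; apply/existsP; exists i; rewrite iIJ.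
by case=> /existsP[i /andP[iIJ e]]; exists i; rewrite inE iIJ ?orbT.
Qed.

Lemma hall_conditionS A A' lam d :
  A' \subset A -> hall_condition A lam d -> hall_condition A' lam d.
Proof. by move=> A'A hA I IA'; apply/hA/(subset_trans IA'). Qed.

Lemma slack_lower I lam d i0 l0 t : i0 \notin I -> l0 \in neighbours I ->
  slack I (lower_at lam i0 t) (lower_at d l0 t) = slack I lam d - t.
Proof.
move=> i0I l0I; rewrite /slack /lower_at !sumrB !sum_delta_in l0I (negbTE i0I).
by rewrite mul1r mul0r subr0 addrAC.
Qed.

(* Lowering the demand of [i0] and the capacity of a neighbour [l0] by [t]
   only decreases the slack of sets that see [l0] but do not contain [i0]. *)
Lemma hall_condition_lower A lam d i0 l0 t :
  hall_condition A lam d -> E i0 l0 ->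
  (forall I, I \subset A :\ i0 -> l0 \in neighbours I -> t <= slack I lam d) ->
  hall_condition A (lower_at lam i0 t) (lower_at d l0 t).
Proof.
move=> hA e ht I IA; have sI := hA I IA.
have [i0I|i0I] := boolP (i0 \in I).
  have l0I : l0 \in neighbours I by rewrite inE; apply/existsP; exists i0; rewrite i0I.
  by move: sI; rewrite /slack /lower_at !sumrB !sum_delta_in i0I l0I; lra.
have [l0I|l0I] := boolP (l0 \in neighbours I).
  by rewrite slack_lower // subr_ge0 ht // subsetD1 IA.
by move: sI; rewrite /slack /lower_at !sumrB !sum_delta_in (negbTE i0I) (negbTE l0I); lra.
Qed.

Lemma allocation0 lam d : (forall l, 0 <= d l) -> allocation set0 lam d (fun _ _ => 0).
Proof. by move=> d0; split=> // [i|l]; rewrite ?inE // big_set0. Qed.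

Lemma allocation_add_null_source A lam d al i0 :
  i0 \in A -> lam i0 = 0 -> allocation (A :\ i0) lam d al ->
  allocation A lam d (fun i l => if i == i0 then 0 else al i l).
Proof.
move=> i0A lam0 [al0 alE alrow alcol]; split=> [i l|i l|i iA|l].
- by case: eqP.
- by case: eqP => // _ /alE.
- by case: eqP => [->|/eqP ne]; [rewrite big1 | rewrite alrow // !inE ne].
rewrite (bigD1 i0) //= eqxx add0r; apply: le_trans (alcol l); rewrite le_eqVlt.
by apply/orP; left; apply/eqP/eq_big => [i|i /andP[_ /negbTE->]] //; rewrite !inE andbC.
Qed.

(* [A'] is [A], or [A :\ i0] when [t] exhausts the demand of [i0]. *)
Lemma allocation_add_edge A A' lam d al i0 l0 t :
  i0 \in A -> E i0 l0 -> 0 <= t -> A :\ i0 \subset A' -> A' \subset A ->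
  (i0 \notin A' -> lam i0 = t) ->
  allocation A' (lower_at lam i0 t) (lower_at d l0 t) al ->
  allocation A lam d
    (fun i l => (if i \in A' then al i l else 0) + (i == i0)%:R * ((l == l0)%:R * t)).
Proof.
move=> i0A e t0 AA' A'A lamt [al0 alE alrow alcol]; split=> [i l|i l|i iA|l].
- by apply: addr_ge0; [case: ifP|rewrite !mulr_ge0 ?ler0n].
- move=> nE; rewrite alE // if_same add0r.
  have [ei|_] := eqVneq i i0; last by rewrite mul0r.
  have [el|_] := eqVneq l l0; last by rewrite mul0r mulr0.
  by move: nE; rewrite ei el e.
- rewrite big_split /= -mulr_sumr sum_delta.
  have [->|ne] := eqVneq i i0; last first.
    have iA' : i \in A' by rewrite (subsetP AA') // !inE ne.
    by rewrite iA' alrow // /lower_at (negbTE ne) !mul0r subr0 addr0.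
  have [i0A'|/lamt <-] := boolP (i0 \in A'); last by rewrite big1 ?add0r ?mul1r.
  by rewrite alrow // /lower_at eqxx !mul1r subrK.
rewrite big_split /= -big_mkcondr (eq_bigl (fun i => i \in A')); last first.
  by move=> i /=; apply/andP/idP => [[]|iA'] //; rewrite (subsetP A'A).
rewrite sum_delta_in i0A mul1r.
by have := alcol l; rewrite /lower_at; lra.
Qed.

Lemma hall_condition_restrict A I lam d : I \subset A -> hall_condition A lam d ->
  hall_condition I lam (fun l => if l \in neighbours I then d l else 0).
Proof.
move=> IA hA J JI; rewrite /slack (eq_bigr d) ?hA ?(subset_trans JI) // => l lJ.
by rewrite (subsetP (neighboursS JI)).
Qed.

Lemma hall_condition_tight_compl A I lam d : I \subset A -> hall_condition A lam d ->
  slack I lam d <= 0 ->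
  hall_condition (A :\: I) lam (fun l => if l \in neighbours I then 0 else d l).
Proof.
move=> IA hA tightI J JAI.
have JI : [disjoint J & I].
  rewrite -setI_eq0 -subset0; apply/subsetP => i; rewrite !inE.
  by case/andP => /(subsetP JAI); rewrite !inE => /andP[/negbTE->].
have := hA (J :|: I); rewrite subUset IA (subset_trans JAI (subsetDl _ _)) => /(_ isT).
rewrite /slack neighboursU (eq_bigl [predU J & I]) => [|i]; last by rewrite inE.
rewrite bigU //= (big_setID (neighbours I) (A := _ :|: _)) /=.
rewrite setIC setKU setDUl setDv setU0 => hJI.
rewrite [X in _ <= X - _](big_setID (neighbours I)) /= big1 ?add0r => [|l]; last first.
  by rewrite inE => /andP[_ ->].
rewrite [X in _ <= X - _](eq_bigr d) => [|l]; last by rewrite inE => /andP[/negbTE->].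
by move: tightI; rewrite /slack; lra.
Qed.

Lemma allocation_union A I lam d al1 al2 : I \subset A ->
  allocation I lam (fun l => if l \in neighbours I then d l else 0) al1 ->
  allocation (A :\: I) lam (fun l => if l \in neighbours I then 0 else d l) al2 ->
  allocation A lam d (fun i l => if i \in I then al1 i l else al2 i l).
Proof.
move=> IA [al1_0 al1E al1row al1col] [al2_0 al2E al2row al2col]; split=> [i l|i l|i iA|l].
- by case: ifP.
- by move=> nE; case: ifP => _; [apply: al1E | apply: al2E].
- by have [iI|iI] := boolP (i \in I); [apply: al1row | apply: al2row; rewrite inE iI].
rewrite (big_setID I) /= (setIidPr IA) (eq_bigr (al1 ^~ l)) => [|i ->] //.
rewrite [X in _ + X](eq_bigr (al2 ^~ l)) => [|i]; last by rewrite inE => /andP[/negbTE->].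
by have := al1col l; have := al2col l; case: ifP => _; lra.
Qed.

Lemma allocation_saturates A lam d al : allocation A lam d al ->
  \sum_(i in A) lam i = \sum_l d l -> forall l, \sum_(i in A) al i l = d l.
Proof.
case=> _ _ alrow alcol total l.
have gap : \sum_l (d l - \sum_(i in A) al i l) = 0.
  by rewrite sumrB exchange_big /= (eq_bigr _ alrow) total subrr.
have gap_ge0 l0 : true -> 0 <= d l0 - \sum_(i in A) al i l0 by rewrite subr_ge0.
have := psumr_eq0P gap_ge0 gap (i := l) isT.
by move/eqP; rewrite subr_eq0 => /eqP.
Qed.

Definition active_edges A d : {set T * L} :=
  [set p | [&& p.1 \in A, E p.1 p.2 & 0 < d p.2]].

Definition hall_size A d := (#|A| + #|active_edges A d|)%N.

Lemma active_edgesS A A' d d' : A' \subset A -> (forall l, 0 < d' l -> 0 < d l) ->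
  active_edges A' d' \subset active_edges A d.
Proof.
move=> A'A dd'; apply/subsetP => -[i l]; rewrite !inE /= => /and3P[iA' -> /dd'->].
by rewrite (subsetP A'A).
Qed.

Lemma hall_size_lt A A' d d' : (#|A'| < #|A|)%N ->
  (forall l, 0 < d' l -> 0 < d l) -> A' \subset A -> (hall_size A' d' < hall_size A d)%N.
Proof.
by move=> ltA dd' A'A; have := subset_leq_card (active_edgesS A'A dd'); rewrite /hall_size; lia.
Qed.

Section HallStep.
Variables (A : {set T}) (lam : T -> R) (d : L -> R).
Hypotheses (lam_ge0 : forall i, i \in A -> 0 <= lam i) (d_ge0 : forall l, 0 <= d l)
  (hallA : hall_condition A lam d).
Hypothesis IH : forall A' lam' d', (hall_size A' d' < hall_size A d)%N ->
  (forall i, i \in A' -> 0 <= lam' i) -> (forall l, 0 <= d' l) ->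
  hall_condition A' lam' d' -> exists al, allocation A' lam' d' al.

Lemma allocation_isolated_source i0 : i0 \in A -> (forall l, E i0 l -> d l <= 0) ->
  exists al, allocation A lam d al.
Proof.
move=> i0A isol.
have lam0 : lam i0 = 0.
  have := @hallA [set i0]; rewrite sub1set i0A => /(_ isT); rewrite /slack big_set1 big1 => [|l].
    by have := lam_ge0 i0A; lra.
  rewrite inE => /existsP[i /andP[]]; rewrite inE => /eqP-> /isol.
  by have := d_ge0 l; lra.
have [al alA] : exists al, allocation (A :\ i0) lam d al.
  apply: IH (hall_conditionS (subsetDl _ _) hallA) => //.
    exact: hall_size_lt (card_setD1_lt i0A) _ (subsetDl _ _).
  by move=> i /setD1P[_]; apply: lam_ge0.
by exists (fun i l => if i == i0 then 0 else al i l); apply: allocation_add_null_source.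
Qed.

Variables (i0 : T) (l0 : L).
Hypotheses (i0A : i0 \in A) (e0 : E i0 l0) (dl0 : 0 < d l0).

Lemma lower_demand_ge0 t i : t <= lam i0 -> i \in A -> 0 <= lower_at lam i0 t i.
Proof.
move=> le_t iA; rewrite /lower_at; case: eqP => [->|_]; last by rewrite mul0r subr0 lam_ge0.
by rewrite mul1r subr_ge0.
Qed.

Lemma allocation_exhaust_capacity : d l0 <= lam i0 ->
  hall_condition A (lower_at lam i0 (d l0)) (lower_at d l0 (d l0)) ->
  exists al, allocation A lam d al.
Proof.
move=> le_d hall'; have d0 := d_ge0 l0.
have [al alA] : exists al, allocation A (lower_at lam i0 (d l0)) (lower_at d l0 (d l0)) al.
  apply: IH hall' => [||l]; last exact: lower_at_ge0.
    suff: active_edges A (lower_at d l0 (d l0)) \proper active_edges A d.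
      by move/proper_card; rewrite /hall_size ltn_add2l.
    apply/properP; split; first by apply: active_edgesS => // l; apply: lower_at_gt0.
    by exists (i0, l0); rewrite !inE /= ?i0A ?e0 ?dl0 // /lower_at eqxx mul1r subrr ltxx !andbF.
  by move=> i; apply: lower_demand_ge0.
by eexists; apply: (allocation_add_edge i0A e0 d0 (subsetDl _ _) (subxx _) _ alA); rewrite i0A.
Qed.

Lemma allocation_exhaust_demand : lam i0 <= d l0 ->
  hall_condition A (lower_at lam i0 (lam i0)) (lower_at d l0 (lam i0)) ->
  exists al, allocation A lam d al.
Proof.
move=> le_lam hall'; have lam0 := lam_ge0 i0A.
have [al alA] : exists al,
    allocation (A :\ i0) (lower_at lam i0 (lam i0)) (lower_at d l0 (lam i0)) al.
  apply: IH (hall_conditionS (subsetDl _ _) hall') => [||l]; last exact: lower_at_ge0.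
    apply: hall_size_lt (card_setD1_lt i0A) _ (subsetDl _ _) => l.
    exact: lower_at_gt0.
  by move=> i /setD1P[_]; apply: lower_demand_ge0.
by eexists; apply: (allocation_add_edge i0A e0 lam0 (subxx _) (subsetDl _ _) _ alA).
Qed.

Lemma allocation_split_tight I t : 0 <= t -> t <= lam i0 -> t <= d l0 ->
  hall_condition A (lower_at lam i0 t) (lower_at d l0 t) ->
  I \subset A :\ i0 -> l0 \in neighbours I -> slack I lam d = t ->
  exists al, allocation A lam d al.
Proof.
move=> t0 le_lam le_d hall' IAi0 l0I slackI.
set lam' := lower_at lam i0 t; set d' := lower_at d l0 t.
have [IA i0I] : I \subset A /\ i0 \notin I by move: IAi0; rewrite subsetD1 => /andP[].
have d'0 l : 0 <= d' l by apply: lower_at_ge0.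
have d'd l : 0 < d' l -> 0 < d l by apply: lower_at_gt0.
have [al1 al1I] : exists al,
    allocation I lam' (fun l => if l \in neighbours I then d' l else 0) al.
  apply: IH (hall_condition_restrict IA hall'); last by move=> l; case: ifP.
    apply: (hall_size_lt _ _ IA) => [|l]; last by case: ifP => _; rewrite ?ltxx //; apply: d'd.
    exact: leq_ltn_trans (subset_leq_card IAi0) (card_setD1_lt i0A).
  by move=> i /(subsetP IA); apply: lower_demand_ge0.
have tightI : slack I lam' d' <= 0 by rewrite slack_lower // slackI subrr.
have [al2 al2I] : exists al,
    allocation (A :\: I) lam' (fun l => if l \in neighbours I then 0 else d' l) al.
  apply: IH (hall_condition_tight_compl IA hall' tightI); last by move=> l; case: ifP.
    apply: (hall_size_lt _ _ (subsetDl _ _)) => [|l]; last by case: ifP => _; rewrite ?ltxx //; apply: d'd.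
    move: l0I; rewrite inE => /existsP[i /andP[iI _]].
    rewrite -(cardsID I A) -[X in (X < _)%N]add0n ltn_add2r lt0n cards_eq0.
    by apply/set0Pn; exists i; rewrite inE iI (subsetP IA).
  by move=> i /setDP[iA _]; apply: lower_demand_ge0.
eexists; apply: (allocation_add_edge i0A e0 t0 (subsetDl _ _) (subxx _)); last first.
  exact: allocation_union IA al1I al2I.
by rewrite i0A.
Qed.

Lemma allocation_along_edge : exists al, allocation A lam d al.
Proof.
pose Q I := (I \subset A :\ i0) && (l0 \in neighbours I).
have QA I : Q I -> I \subset A by case/andP=> IA _; apply: subset_trans IA (subsetDl _ _).
have [σ [σ0 σlam σslack σtight]] : exists σ, [/\ 0 <= σ, σ <= lam i0,
    forall I, Q I -> σ <= slack I lam d &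
    σ = lam i0 \/ exists2 I, Q I & slack I lam d = σ].
  case: (pickP Q) => [I0 QI0|noQ]; last first.
    by exists (lam i0); split=> [||I|]; [exact: lam_ge0|done|rewrite noQ|left].
  case: (arg_minP (fun I => slack I lam d) QI0) => Im QIm minIm.
  exists (Order.min (lam i0) (slack Im lam d)); split.
  - by rewrite le_min lam_ge0 // hallA // QA.
  - by rewrite ge_min lexx.
  - by move=> I /minIm; apply: le_trans; rewrite ge_min lexx orbT.
  - by case: leP => _; [left|right; exists Im].
have hall_t t : t <= σ -> hall_condition A (lower_at lam i0 t) (lower_at d l0 t).
  move=> tσ; apply: hall_condition_lower => // I IA l0I.
  by apply: le_trans tσ (σslack _ _); rewrite /Q IA l0I.
have [dσ|σd] := ltP (d l0) σ.
  apply: allocation_exhaust_capacity (hall_t _ (ltW dσ)).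
  exact: le_trans (ltW dσ) σlam.
case: σtight => [σE|[I /andP[IA l0I] slackI]].
  by apply: allocation_exhaust_demand; rewrite -σE //; apply: hall_t.
exact: allocation_split_tight σ0 σlam σd (hall_t _ (lexx _)) IA l0I slackI.
Qed.
End HallStep.

Theorem hall_allocation A lam d :
  (forall i, i \in A -> 0 <= lam i) -> (forall l, 0 <= d l) -> hall_condition A lam d ->
  exists al, allocation A lam d al.
Proof.
have [k] := ubnP (hall_size A d).
elim: k A lam d => // k IHk A lam d size_lt lam0 d0 hallA.
have [->|[i0 i0A]] := set_0Vmem A; first by exists (fun _ _ => 0); apply: allocation0.
have IH A' lam' d' : (hall_size A' d' < hall_size A d)%N ->
    (forall i, i \in A' -> 0 <= lam' i) -> (forall l, 0 <= d' l) ->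
    hall_condition A' lam' d' -> exists al, allocation A' lam' d' al.
  by move=> lt; apply: IHk; apply: leq_trans lt _.
have [/existsP[l0 /andP[e0 dl0]]|noedge] := boolP [exists l, E i0 l && (0 < d l)].
  exact: (@allocation_along_edge _ _ _ lam0 d0 hallA IH i0 l0 i0A e0 dl0).
apply: (allocation_isolated_source lam0 d0 hallA IH i0A) => l e.
by rewrite leNgt; apply: contra noedge => dl; apply/existsP; exists l; rewrite e.
Qed.
End FractionalHall.

Lemma expr_AGM2 (R : realFieldType) (x y : R) (m k : nat) : 0 <= x -> 0 <= y ->
  x ^+ m * y ^+ k <= ((m%:R * x + k%:R * y) / (m + k)%:R) ^+ (m + k).
Proof.
move=> x0 y0; pose F (i : 'I_(m + k)) := if (i < m)%N then x else y.
have F0 : {in predT, forall i, 0 <= F i} by move=> i _; rewrite /F; case: ifP.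
have := (leif_AGM F0).1; rewrite card_ord.
have Fl i : F (lshift k i) = x by rewrite /F /= ltn_ord.
have Fr i : F (rshift m i) = y by rewrite /F /= ltnNge leq_addr.
change (\prod_i F i <= ((\sum_i F i) / (m + k)%:R) ^+ (m + k) ->
  x ^+ m * y ^+ k <= ((m%:R * x + k%:R * y) / (m + k)%:R) ^+ (m + k)).
rewrite !big_split_ord /=.
rewrite !(eq_bigr (fun=> x) (fun i _ => Fl i)) !(eq_bigr (fun=> y) (fun i _ => Fr i)).
by rewrite !prodr_const !sumr_const !card_ord !mulr_natl.
Qed.

(* The weights of the exponential potential: [a] on the overloaded nodes and
   [b] elsewhere, with [a < 1], one-step drift [mu a + nu b = 1], and
   [a ^ m b ^ k >= 1] by AM-GM since [m / a + k / b = m + k]. *)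
Lemma potential_weights (R : realFieldType) (m k : nat) (mu nu : R) :
  (0 < m)%N -> 0 < mu -> 0 < nu -> mu + nu = 1 -> m%:R < mu * (m + k)%:R ->
  exists a b : R, [/\ 0 < a < 1, a <= b, mu * a + nu * b = 1 & 1 <= a ^+ m * b ^+ k].
Proof.
move=> m0 mu0 nu0 munu over; set N := (m + k)%:R in over.
have mR : 0 < m%:R :> R by rewrite ltr0n.
have NE : N = m%:R + k%:R by rewrite /N natrD.
have kR : nu * N < k%:R by nra.
have k0 : 0 < k%:R :> R by nra.
pose a := m%:R / (N * mu); pose b := k%:R / (N * nu).
have Nmu : 0 < N * mu by nra.
have Nnu : 0 < N * nu by nra.
have a0 : 0 < a by rewrite divr_gt0.
have a1 : a < 1 by rewrite ltr_pdivrMr // mul1r mulrC.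
have b1 : 1 < b by rewrite ltr_pdivlMr // mul1r mulrC.
exists a, b; split; rewrite ?a0 ?a1 //; first lra.
  by rewrite /a /b; field; rewrite -NE; nra.
have ia : 0 <= a^-1 by rewrite invr_ge0 ltW.
have ib : 0 <= b^-1 by rewrite invr_ge0; lra.
have mean1 : (m%:R * a^-1 + k%:R * b^-1) / N = 1.
  have -> : m%:R * a^-1 = N * mu by rewrite /a invf_div mulrCA divff ?mulr1 ?gt_eqF.
  have -> : k%:R * b^-1 = N * nu by rewrite /b invf_div mulrCA divff ?mulr1 ?gt_eqF.
  by rewrite -mulrDr munu mulr1 divff // gt_eqF //; lra.
have := @expr_AGM2 _ _ _ m k ia ib; rewrite mean1 expr1n !exprVn -invfM.
by rewrite invf_le1 // mulr_gt0 // exprn_gt0 //; lra.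
Qed.

Section LoadPotential.
Variables (R : realFieldType) (n : nat) (U : {set 'I_n}) (a b : R).

Definition load_potential (x : 'I_n -> nat) :=
  a ^+ (\sum_(l in U) x l) * b ^+ (\sum_(l in ~: U) x l).

Lemma load_potential_incr x l :
  load_potential (incr x l) = load_potential x * (if l \in U then a else b).
Proof.
have count_l (V : {set 'I_n}) : (\sum_(k in V) (k == l) = (l \in V))%N.
  have [lV|lV] := boolP (l \in V).
    by rewrite (bigD1 l) //= eqxx big1 // => k /andP[_ /negbTE->].
  by rewrite big1 // => k kV; case: eqP => // ek; move: lV; rewrite -ek kV.
rewrite /load_potential /incr !big_split /= !count_l !exprD inE.
by case: (l \in U); rewrite /= expr1 expr0; ring.
Qed.

Lemma load_potential_balanced x : 0 <= a -> 0 <= b -> 1 <= a ^+ #|U| * b ^+ #|~: U| ->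
  balanced x -> 1 <= load_potential x.
Proof.
move=> a0 b0 ab1 /forallP xbal; rewrite /load_potential.
have [l1 _|none] := pickP (@predT 'I_n); last first.
  by rewrite !big_pred0 ?expr0 ?mulr1 // => l; have := none l.
have xl l : x l = x l1 by apply/eqP/(forallP (xbal l)).
rewrite (eq_bigr (fun=> x l1)) // [X in b ^+ X](eq_bigr (fun=> x l1)) //.
by rewrite !sum_nat_const !exprM -exprMn exprn_ege1.
Qed.

End LoadPotential.

Section EmbeddedChain.
Variables (R : realType) (n K : nat) (kappa : 'I_K -> nat).
Variables (s : forall i : 'I_K, 'I_(kappa i) -> 'I_n) (lam : 'I_K -> R).
Variable p : ('I_n -> nat) -> forall i : 'I_K, 'I_(kappa i) -> R.
Arguments s : clear implicits.
Arguments p : clear implicits.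
Hypotheses (p_ge0 : forall x i j, 0 <= p x i j) (p_sum1 : forall x i, \sum_j p x i j = 1).
Hypothesis lam_ge0 : forall i, 0 <= lam i.

Lemma step_prob_ge0 x l : 0 <= step_prob s lam p x l.
Proof.
by apply: sumr_ge0 => i _; rewrite mulr_ge0 //; apply: sumr_ge0 => j _; rewrite mulr_ge0.
Qed.

Lemma sum_step_prob x (c : 'I_n -> R) :
  \sum_l step_prob s lam p x l * c l = \sum_i lam i * \sum_j p x i j * c (s i j).
Proof.
rewrite /step_prob; under eq_bigr do rewrite mulr_suml.
rewrite exchange_big; apply: eq_bigr => i _ /=.
under eq_bigr do rewrite -mulrA mulr_suml.
rewrite -mulr_sumr exchange_big /=; congr (_ * _); apply: eq_bigr => j _.
under eq_bigr do rewrite -mulrA eq_sym.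
by rewrite -mulr_sumr sum_delta.
Qed.

Section Superharmonic.
Variable h : ('I_n -> nat) -> R.
Hypotheses (h_ge0 : forall x, 0 <= h x) (h_balanced : forall x, balanced x -> 1 <= h x).
Hypothesis h_super : forall x, \sum_l step_prob s lam p x l * h (incr x l) <= h x.

Lemma hit_prob_le N x : hit_prob s lam p N x <= h x.
Proof.
elim: N x => [|N IH] x /=; first exact: h_ge0.
apply: le_trans (h_super x); apply: ler_sum => l _.
by apply: ler_wpM2l; [exact: step_prob_ge0 | case: ifP => [/h_balanced|_]].
Qed.

Lemma not_recurrent_of_superharmonic x0 : h x0 < 1 -> ~ recurrent s lam p.
Proof.
move=> hx0 rec; have [|N] := rec x0 ((1 - h x0) / 2); first by rewrite divr_gt0 ?subr_gt0.
by have := hit_prob_le N x0; lra.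
Qed.

End Superharmonic.

(* Each arrival multiplies the potential by [a] if stored in [U] and by at
   most [b] otherwise; arrivals at [I] are always stored in [U]. *)
Lemma load_potential_superharmonic (I : {set 'I_K}) (U : {set 'I_n}) a b x :
  (forall i j, i \in I -> s i j \in U) -> 0 <= a <= b ->
  (\sum_(i in I) lam i) * a + (\sum_(i in ~: I) lam i) * b <= 1 ->
  \sum_l step_prob s lam p x l * load_potential U a b (incr x l) <= load_potential U a b x.
Proof.
move=> sIU /andP[a0 ab] drift.
under eq_bigr do rewrite load_potential_incr mulrCA.
rewrite -mulr_sumr sum_step_prob ler_piMr //.
  by rewrite /load_potential mulr_ge0 // exprn_ge0 //; apply: le_trans ab.
apply: le_trans drift; rewrite (bigID (mem I)) /= !mulr_suml.
rewrite [X in _ <= _ + X](eq_bigl (fun i => i \notin I)) => [|i]; last by rewrite inE.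
apply: lerD; apply: ler_sum => i iI; apply: ler_wpM2l => //.
  rewrite -[X in _ <= X]mul1r -(p_sum1 x i) mulr_suml.
  by apply: ler_sum => j _; rewrite sIU.
rewrite -[X in _ <= X]mul1r -(p_sum1 x i) mulr_suml; apply: ler_sum => j _.
by apply: ler_wpM2l => //; case: ifP.
Qed.

Lemma not_recurrent_of_overloaded (I : {set 'I_K}) (U : {set 'I_n}) l1 a b :
  (forall i j, i \in I -> s i j \in U) -> l1 \in U -> 0 < a < 1 -> a <= b ->
  (\sum_(i in I) lam i) * a + (\sum_(i in ~: I) lam i) * b <= 1 ->
  1 <= a ^+ #|U| * b ^+ #|~: U| -> ~ recurrent s lam p.
Proof.
move=> sIU l1U /andP[a0 a1] ab drift amgm; have b0 : 0 <= b by lra.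
apply: (@not_recurrent_of_superharmonic (load_potential U a b) _ _ _ (incr (fun=> 0%N) l1)).
- by move=> x; rewrite /load_potential mulr_ge0 // exprn_ge0 // ltW.
- by move=> x; apply: load_potential_balanced => //; apply: ltW.
- by move=> x; apply: load_potential_superharmonic sIU _ drift; rewrite ltW.
by rewrite load_potential_incr l1U /load_potential !big1 // !expr0 !mul1r.
Qed.

End EmbeddedChain.

Lemma sum_codom_delta (R : pzRingType) (X : finType) (k : nat) (f : 'I_k -> X) y :
  injective f -> y \in codom f -> \sum_j (y == f j)%:R = 1 :> R.
Proof.
move=> f_inj /codomP[j0 ->]; rewrite (bigD1 j0) //= eqxx big1 ?addr0 // => j ne.
by rewrite (inj_eq f_inj) eq_sym (negbTE ne).
Qed.

Section StorageModel.
Variables (R : realType) (n K : nat) (kappa : 'I_K -> nat).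
Variables (s : forall i : 'I_K, 'I_(kappa i) -> 'I_n) (lam : 'I_K -> R).
Arguments s : clear implicits.
Hypotheses (hK : (0 < K)%N) (hkappa : forall i, (0 < kappa i)%N).
Hypotheses (hs_inj : forall i, injective (s i)) (hcover : forall l, exists i j, s i j = l).
Hypotheses (hlam_pos : forall i, 0 < lam i) (hlam_sum : \sum_i lam i = 1).

Definition serves i l := l \in codom (s i).

Let uniform : 'I_n -> R := fun=> 1 / n%:R.

Lemma nodes_gt0 : (0 < n)%N.
Proof. exact: leq_ltn_trans (leq0n _) (ltn_ord (s (Ordinal hK) (Ordinal (hkappa _)))). Qed.

Lemma uniform_routing_of_allocation al : allocation serves setT lam uniform al ->
  exists alpha : forall i : 'I_K, 'I_(kappa i) -> R,
    (forall i j, 0 <= alpha i j) /\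
    (forall i, \sum_(j < kappa i) alpha i j = lam i) /\
    (forall l : 'I_n,
       \sum_(i < K) \sum_(j < kappa i) alpha i j * (l == s i j)%:R = 1 / n%:R).
Proof.
move=> alA; have [al0 alE alrow _] := alA.
have nR : n%:R != 0 :> R by rewrite pnatr_eq0 -lt0n nodes_gt0.
have col l : \sum_i al i l = 1 / n%:R.
  rewrite -[RHS]/(uniform l) -(allocation_saturates alA _ l).
    by apply: eq_bigl => i; rewrite inE.
  rewrite sumr_const card_ord -[_ *+ n]mulr_natr div1r mulVf // -hlam_sum.
  by apply: eq_bigl => i; rewrite inE.
have image_al i l : \sum_j (l == s i j)%:R * al i l = al i l.
  rewrite -mulr_suml; have [lsi|lsi] := boolP (serves i l).
    by rewrite sum_codom_delta ?mul1r.
  by rewrite alE // mulr0.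
exists (fun i j => al i (s i j)); split=> [//|]; split=> [i|l].
  rewrite -(alrow i) ?inE // -(eq_bigr _ (fun l _ => image_al i l)) exchange_big /=.
  by apply: eq_bigr => j _; rewrite sum_delta.
rewrite -(col l); apply: eq_bigr => i _; rewrite -[RHS]image_al.
by apply: eq_bigr => j _; case: eqP => [->|_]; rewrite ?mulr0 ?mul0r ?mulr1 ?mul1r.
Qed.

Lemma neighbours_setT : neighbours serves setT = setT.
Proof.
apply/setP => l; rewrite !inE; have [i [j <-]] := hcover l.
by apply/existsP; exists i; rewrite inE /serves codom_f.
Qed.

Lemma not_recurrent_of_hall_failure p I :
  (forall x i j, 0 <= p x i j) -> (forall x i, \sum_j p x i j = 1) ->
  slack serves I lam uniform < 0 -> ~ recurrent s lam p.
Proof.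
move=> p_ge0 p_sum1 violated; set U := neighbours serves I.
set mu := \sum_(i in I) lam i; set nu := \sum_(i in ~: I) lam i.
have lam_ge0 i : 0 <= lam i by apply: ltW.
have munu : mu + nu = 1.
  by rewrite -hlam_sum (bigID (mem I)) /=; congr (_ + _); apply: eq_bigl => i; rewrite inE.
have nR : 0 < n%:R :> R by rewrite ltr0n nodes_gt0.
have over : #|U|%:R < mu * n%:R.
  move: violated; rewrite /slack sumr_const -[_ *+ _]mulr_natr subr_lt0.
  by rewrite div1r mulrC ltr_pdivrMr.
have sIU i j : i \in I -> s i j \in U.
  by move=> iI; rewrite inE; apply/existsP; exists i; rewrite iI /serves codom_f.
have [I0|[i1 i1I]] := set_0Vmem I.
  by move: over; rewrite /mu I0 big_set0 mul0r ltNge ler0n.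
pose j1 := Ordinal (hkappa i1).
have m0 : (0 < #|U|)%N by rewrite card_gt0; apply/set0Pn; exists (s i1 j1); apply: sIU.
have mu0 : 0 < mu by rewrite -(pmulr_lgt0 _ nR); apply: le_lt_trans over.
have nu0 : 0 < nu.
  have [i2 i2I] : exists i2, i2 \notin I.
    apply/existsP; apply: contraTT over => /existsPn allI.
    have IT : I = setT by apply/setP => i; rewrite inE; apply/negPn/allI.
    rewrite /U IT neighbours_setT cardsT card_ord -leNgt /mu IT.
    by under eq_bigl do rewrite in_setT; rewrite hlam_sum mul1r.
  rewrite /nu (bigD1 i2) ?inE //=; apply: lt_le_trans (hlam_pos i2) _.
  by rewrite lerDl sumr_ge0.
have cardU : n%:R = (#|U| + #|~: U|)%:R :> R by rewrite cardsC card_ord.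
rewrite cardU in over.
have [a [b [a01 ab drift amgm]]] := potential_weights m0 mu0 nu0 munu over.
apply: (not_recurrent_of_overloaded p_ge0 p_sum1 lam_ge0 sIU (sIU i1 j1 i1I) a01 ab) => //.
by rewrite -/mu -/nu drift.
Qed.

End StorageModel.

Unset Implicit Arguments.
Set Strict Implicit.

Theorem theorem2p2 (R : realType) (n K : nat) (kappa : 'I_K -> nat)
  (s : forall i : 'I_K, 'I_(kappa i) -> 'I_n) (lam : 'I_K -> R)
  (hK : (0 < K)%N)
  (hkappa : forall i, (0 < kappa i)%N)
  (hs_inj : forall i, injective (s i))
  (hcover : forall l : 'I_n, exists i, exists j, s i j = l)
  (hlam_pos : forall i, 0 < lam i)
  (hlam_sum : \sum_(i < K) lam i = 1)
  (hP : exists p : ('I_n -> nat) -> forall i : 'I_K, 'I_(kappa i) -> R,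
          routing_policy p /\ recurrent s lam p) :
  exists alpha : forall i : 'I_K, 'I_(kappa i) -> R,
    (forall i j, 0 <= alpha i j) /\
    (forall i, \sum_(j < kappa i) alpha i j = lam i) /\
    (forall l : 'I_n,
       \sum_(i < K) \sum_(j < kappa i) alpha i j * (l == s i j)%:R = 1 / n%:R).
Proof.
have [p [[p_ge0 [p_sum1 _]] rec]] := hP.
pose uniform : 'I_n -> R := fun=> 1 / n%:R.
have [hall|] := boolP [forall I, 0 <= slack (serves s) I lam uniform].
  have uniform_ge0 l : 0 <= uniform l by rewrite divr_ge0 ?ler0n.
  have [al alA] := @hall_allocation _ _ _ (serves s) setT lam uniform
    (fun i _ => ltW (hlam_pos i)) uniform_ge0 (fun I _ => forallP hall I).
  exact: (uniform_routing_of_allocation hK hkappa hs_inj hlam_sum alA).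
case/forallPn => I; rewrite -ltNge => violated.
by case: (not_recurrent_of_hall_failure hK hkappa hcover hlam_pos hlam_sum p_ge0 p_sum1 violated).
Qed.
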